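(* Let $m,h\in\mathbb N$ and let $\mathcal P_{m,h}$ be the class of functions on $\mathbb R^h$ of the form $$p(y_1,\dots,y_h)=b_1y_1^{e_1}+b_2y_2^{e_2}+\dots+b_hy_h^{e_h},$$ where $0=e_1<e_2<\dots<e_h$ are integers and $b_1,\dots,b_h\in\mathbb Z$ satisfy $|b_i|\le m$ for all $i$ and $(b_1,\dots,b_h)\ne(0,\dots,0)$. Let $\eta>1$ be transcendental. Then there exist constants $\delta>0$ and $\varepsilon>0$, depending only on $\eta,m,h$, such that $$|p(y_1,\dots,y_h)|\ge\varepsilon$$ for all $p\in\mathcal P_{m,h}$ and all $(y_1,\dots,y_h)\in\mathbb R^h$ satisfying $$\frac{y_j^{e_j}}{y_i^{e_i}}\in\Big[(\eta-\delta)^{e_j-e_i},(\eta+\delta)^{e_j-e_i}\Big]\qquad\text{for all }1\le i<j\le h$$ (here $e_1,\dots,e_h$ are the exponents of the particular $p$). *)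

From HB Require Import structures.
From mathcomp Require Import all_boot all_order all_algebra.
From mathcomp Require Import reals.
Set Implicit Arguments. Unset Strict Implicit. Unset Printing Implicit Defensive.
Import Order.TTheory GRing.Theory Num.Theory.
Local Open Scope ring_scope.

Definition transcendental (R : realType) (x : R) : Prop :=
  forall p : {poly int}, p != 0 -> ~~ root (map_poly (fun z : int => z%:~R) p) x.

From HB Require Import structures.
From mathcomp Require Import all_boot all_order all_algebra.
From mathcomp Require Import reals.
From mathcomp Require Import ring lra zify.
Set Implicit Arguments. Unset Strict Implicit. Unset Printing Implicit Defensive.
Import Order.TTheory GRing.Theory Num.Theory.
Local Open Scope ring_scope.

(* Write Y_i = y_i^e_i, so that Y_0 = 1 and Y_j / Y_i is close to eta^(e_j - e_i).
   We show by induction on the number of terms that |sum_i b_i Y_i| >= r Y_0.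
   If all the gaps e_(i+1) - e_i are at most K, only finitely many patterns of
   exponents and coefficients occur; for each of them sum_i b_i eta^(e_i - e_0)
   is nonzero because eta is transcendental, and it stays bounded away from 0
   when the powers of eta are perturbed slightly, uniformly over the patterns.
   If some gap e_(j+1) - e_j exceeds K, then Y_(j+1) >= ((eta + 1) / 2)^K Y_j,
   so for K large the block of terms after j, bounded below by induction,
   dominates the block up to j; if the block after j vanishes, induction
   applies to the block up to j instead. *)

Section PowerBounds.
Variable R : realDomainType.

Lemma subrXX_le (x y : R) (d : nat) : 0 <= x <= y ->
  y ^+ d - x ^+ d <= (y - x) * (y ^+ d.-1 *+ d).
Proof.
move=> /andP[x0 xy]; rewrite subrXX ler_wpM2l ?subr_ge0 //.
rewrite -[d in _ *+ d]card_ord -sumr_const; apply: ler_sum => i _.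
have i_le : (i <= d.-1)%N by rewrite -ltnS prednK ?(leq_trans _ (ltn_ord i)).
rewrite -{2}(subnK i_le) exprD ler_wpM2l ?exprn_ge0 ?(le_trans x0) //.
by rewrite lerXn2r ?nnegrE ?(le_trans x0).
Qed.

Lemma dist_expr_interval (x dl z : R) (d : nat) : 0 <= dl <= x ->
  (x - dl) ^+ d <= z <= (x + dl) ^+ d ->
  `|z - x ^+ d| <= dl * ((x + dl) ^+ d.-1 *+ d).
Proof.
move=> /andP[dl0 dlx] /andP[zlo zhi].
have x0 : 0 <= x := le_trans dl0 dlx.
have x_le : 0 <= x <= x + dl by rewrite x0 lerDl.
have xdl_le : 0 <= x - dl <= x by rewrite subr_ge0 dlx gerBl.
have up := subrXX_le d x_le; have lo := subrXX_le d xdl_le.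
have mono : x ^+ d.-1 *+ d <= (x + dl) ^+ d.-1 *+ d.
  by rewrite lerMn2r orbC lerXn2r ?nnegrE //; lra.
have dl_mono := ler_wpM2l dl0 mono.
rewrite addrAC subrr add0r in up; rewrite subKr in lo.
rewrite ler_norml; apply/andP; split; lra.
Qed.

Lemma bernoulli_ineq (t : R) (n : nat) : 0 <= t -> 1 + n%:R * t <= (1 + t) ^+ n.
Proof.
move=> t0; elim: n => [|n IH]; first by rewrite mul0r addr0 expr0.
rewrite exprS -natr1; have : 0 <= n%:R * t by rewrite mulr_ge0 ?ler0n.
nra.
Qed.

End PowerBounds.

Lemma exists_expr_ge (R : archiFieldType) (a M : R) : 1 < a -> exists K : nat, M <= a ^+ K.
Proof.
move=> a1; have t0 : 0 < a - 1 by rewrite subr_gt0.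
have M0 : 0 <= `|M| / (a - 1) by rewrite divr_ge0 ?normr_ge0 ?ltW.
exists (Num.bound (`|M| / (a - 1))).
have := archi_boundP M0; rewrite ltr_pdivrMr // => Mlt.
have := bernoulli_ineq (Num.bound (`|M| / (a - 1))) (ltW t0); rewrite subrKC.
have := ler_norm M; lra.
Qed.

Lemma finite_uniform_radius (R : realDomainType) (T : finType) (P : T -> R -> Prop) :
  (forall t r r', 0 < r' <= r -> P t r -> P t r') ->
  (forall t, exists2 r, 0 < r & P t r) -> exists2 r, 0 < r & forall t, P t r.
Proof.
move=> antiP exP.
suff [r r0 Pr] : exists2 r, 0 < r & forall t, t \in enum T -> P t r.
  by exists r => // t; apply: Pr; rewrite mem_enum.
elim: (enum T) => [|t s [r r0 Pr]]; first by exists 1.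
have [r' r'0 Pr'] := exP t.
have min_gt0 : 0 < Order.min r r' by rewrite lt_min r0 r'0.
exists (Order.min r r') => // u; rewrite in_cons => /predU1P[->|us].
  by apply: antiP Pr'; rewrite min_gt0 ge_min lexx orbT.
by apply: antiP (Pr u us); rewrite min_gt0 ge_min lexx.
Qed.

Lemma transcendental_sum_neq0 (R : realType) (x : R) (n : nat)
    (d : 'I_n -> nat) (c : 'I_n -> int) :
  transcendental x -> injective d -> (exists i, c i != 0) ->
  \sum_(i < n) (c i)%:~R * x ^+ d i != 0.
Proof.
move=> tr dinj [j cj].
pose p : {poly int} := \sum_(i < n) c i *: 'X^(d i).
have coef_p i : p`_(d i) = c i.
  rewrite coef_sum (bigD1 i) //= coefZ coefXn eqxx mulr1 big1 ?addr0 // => k ki.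
  by rewrite coefZ coefXn eq_sym (inj_eq dinj) (negbTE ki) mulr0.
have p_neq0 : p != 0 by apply: contraNneq cj => p0; rewrite -coef_p p0 coef0.
have -> : \sum_(i < n) (c i)%:~R * x ^+ d i = (map_poly (fun z : int => z%:~R) p).[x].
  rewrite (_ : (fun z : int => z%:~R) = intr) // raddf_sum horner_sum.
  apply: eq_bigr => i _.
  by rewrite /= map_polyZ map_polyXn hornerZ hornerXn.
exact: tr.
Qed.

Lemma sum_expr_perturb_ge (R : realFieldType) (x : R) (n : nat)
    (d : 'I_n -> nat) (c : 'I_n -> int) :
  0 < x -> \sum_(i < n) (c i)%:~R * x ^+ d i != 0 ->
  exists2 r, 0 < r & forall dl, 0 <= dl <= r -> forall z : 'I_n -> R,
    (forall i, (x - dl) ^+ d i <= z i <= (x + dl) ^+ d i) ->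
    r <= `|\sum_(i < n) (c i)%:~R * z i|.
Proof.
move=> x0; set P := \sum_(i < n) _ => P0.
pose C := \sum_(i < n) `|(c i)%:~R : R| * ((x + x) ^+ (d i).-1 *+ d i).
have C0 : 0 <= C by rewrite sumr_ge0 // => i _; rewrite mulr_ge0 ?mulrn_wge0 ?exprn_ge0 //; lra.
have C1 : 0 < C + 1 by lra.
pose r := Order.min x (`|P| / (C + 1)).
have r_gt0 : 0 < r by rewrite lt_min x0 divr_gt0 ?normr_gt0.
have rC : r * (C + 1) <= `|P| by rewrite -ler_pdivlMr // ge_min lexx orbT.
exists r => // dl /andP[dl0 dlr] z zE.
have dlx : dl <= x by apply: le_trans dlr _; rewrite ge_min lexx.
have dist : `|\sum_(i < n) (c i)%:~R * z i - P| <= dl * C.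
  rewrite -sumrB mulr_sumr; apply: le_trans (ler_norm_sum _ _ _) _.
  apply: ler_sum => i _; rewrite -mulrBr normrM mulrCA ler_wpM2l //.
  apply: le_trans (dist_expr_interval _ (zE i)) _; first by rewrite dl0.
  rewrite ler_wpM2l // lerMn2r orbC lerXn2r ?nnegrE //; lra.
have := lerB_normD P (\sum_(i < n) (c i)%:~R * z i - P); rewrite subrKC.
have : dl * C <= r * C by rewrite ler_wpM2r.
lra.
Qed.

Lemma sum_expr_perturb_ge_uniform (R : realFieldType) (x : R) (n N M : nat) : 0 < x ->
  exists2 r, 0 < r & forall (d : 'I_n -> nat) (c : 'I_n -> int),
    (forall i, (d i <= N)%N) -> (forall i, `|c i| <= M%:Z) ->
    \sum_(i < n) (c i)%:~R * x ^+ d i != 0 ->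
    forall dl, 0 <= dl <= r -> forall z : 'I_n -> R,
    (forall i, (x - dl) ^+ d i <= z i <= (x + dl) ^+ d i) ->
    r <= `|\sum_(i < n) (c i)%:~R * z i|.
Proof.
move=> x0.
pose T := ({ffun 'I_n -> 'I_N.+1} * {ffun 'I_n -> 'I_(M + M).+1})%type.
(* A pattern [t : T] encodes the exponents [t.1] and the coefficients [t.2 - M]. *)
pose coef (t : T) i : int := (t.2 i)%:Z - M%:Z.
pose P (t : T) r := \sum_(i < n) (coef t i)%:~R * x ^+ t.1 i != 0 ->
  forall dl, 0 <= dl <= r -> forall z : 'I_n -> R,
  (forall i, (x - dl) ^+ t.1 i <= z i <= (x + dl) ^+ t.1 i) ->
  r <= `|\sum_(i < n) (coef t i)%:~R * z i|.
have [r r_gt0 Pr] : exists2 r, 0 < r & forall t, P t r.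
  apply: finite_uniform_radius => [t r r' /andP[r'0 r'r] Ptr P0 dl /andP[dl0 dlr'] z zE|t].
    have dlr : 0 <= dl <= r by rewrite dl0 (le_trans dlr').
    exact: le_trans r'r (Ptr P0 dl dlr z zE).
  have [P0|P0] := eqVneq (\sum_(i < n) (coef t i)%:~R * x ^+ t.1 i) 0.
    by exists 1 => //; rewrite /P P0 eqxx.
  have [r r_gt0 Pr] := sum_expr_perturb_ge x0 P0.
  by exists r => // _.
exists r => // d c dN cM P0 dl dlr z zE.
pose t : T := ([ffun i => inord (d i)], [ffun i => inord (absz (c i + M%:Z))]).
have t1E i : (t.1 i : nat) = d i by rewrite ffunE inordK // ltnS dN.
have coefE i : coef t i = c i.
  by have cMi := cM i; rewrite /coef ffunE inordK; lia.
have sumE (f : 'I_n -> R) :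
    \sum_(i < n) (coef t i)%:~R * f i = \sum_(i < n) (c i)%:~R * f i.
  by apply: eq_bigr => i _; rewrite coefE.
rewrite -sumE; apply: (Pr t _ dl dlr) => [|i]; last by rewrite t1E.
by rewrite sumE; under eq_bigr do rewrite t1E.
Qed.

Lemma big_ord_split_at (V : nmodType) (F : nat -> V) (n j : nat) : (j <= n)%N ->
  \sum_(i < n) F i = \sum_(i < j) F i + \sum_(i < n - j) F (i + j)%N.
Proof.
move=> jn; rewrite -!(big_mkord xpredT F) -(big_mkord xpredT (fun i => F (i + j)%N)).
rewrite (big_cat_nat (leq0n j) jn) /=.
by congr (_ + _); rewrite -{1}[j]add0n big_addn.
Qed.

Lemma exponent_spread (k K : nat) (e : nat -> nat) :
  (forall i j, (i < j < k)%N -> (e i < e j)%N) ->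
  (forall j, (j.+1 < k)%N -> (e j.+1 - e j <= K)%N) ->
  forall i, (i < k)%N -> (e i - e 0 <= i * K)%N.
Proof.
move=> einc gap; elim=> [|i IH] ik; first by rewrite subnn.
have e0i : (e 0 <= e i)%N by case: i {IH} ik => // i ik; apply/ltnW/einc; lia.
have := einc i i.+1; rewrite ltnSn ik => /(_ isT) eii.
have := gap i ik; have := IH (ltnW ik); rewrite mulSn; lia.
Qed.

Section LacunarySums.
Variables (R : realType) (eta : R) (m : nat).
Hypotheses (eta_gt1 : 1 < eta) (eta_tr : transcendental eta).

(* [Y i] plays the role of [y_i ^ e_i]. *)
Definition admissible (k : nat) (dl : R) (e : nat -> nat) (b : nat -> int)
    (Y : nat -> R) : Prop :=
  [/\ forall i j, (i < j < k)%N -> (e i < e j)%N,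
      forall i, (i < k)%N -> `|b i| <= m%:Z,
      exists2 i, (i < k)%N & b i != 0,
      forall i, (i < k)%N -> 0 < Y i &
      forall i j, (i < j < k)%N ->
        (eta - dl) ^+ (e j - e i) <= Y j / Y i <= (eta + dl) ^+ (e j - e i)].

(* The same [r] serves as the tolerance [delta] and as the bound [eps]. *)
Definition sum_bounded_below (k : nat) (r : R) : Prop :=
  forall dl, 0 <= dl <= r -> forall e b Y, admissible k dl e b Y ->
    r * Y 0%N <= `|\sum_(i < k) (b i)%:~R * Y i|.

Lemma admissible_shift k k' s dl e b Y :
  admissible k dl e b Y -> (k' + s <= k)%N ->
  (exists2 i, (i < k')%N & b (i + s)%N != 0) ->
  admissible k' dl (fun i => e (i + s)%N) (fun i => b (i + s)%N) (fun i => Y (i + s)%N).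
Proof.
move=> [einc bm _ Ypos hY] ks bnz; split => // [i j|i|i|i j] ?;
  [apply: einc | apply: bm | apply: Ypos | apply: hY]; lia.
Qed.

Lemma admissible_take k k' dl e b Y :
  admissible k dl e b Y -> (k' <= k)%N -> (exists2 i, (i < k')%N & b i != 0) ->
  admissible k' dl e b Y.
Proof.
move=> [einc bm _ Ypos hY] k'k bnz; split => // [i j|i|i|i j] ?;
  [apply: einc | apply: bm | apply: Ypos | apply: hY]; lia.
Qed.

Lemma sum_bounded_below_le k r r' :
  sum_bounded_below k r -> 0 < r' <= r -> sum_bounded_below k r'.
Proof.
move=> lb /andP[r'0 r'r] dl /andP[dl0 dlr'] e b Y adm.
have [_ _ [i ik _] Ypos _] := adm.
apply: le_trans (lb dl _ e b Y adm); last by rewrite dl0 (le_trans dlr').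
by rewrite ler_wpM2r // ltW // Ypos // (leq_ltn_trans _ ik).
Qed.

Lemma admissible_nondecreasing k dl e b Y :
  admissible k dl e b Y -> dl <= eta - 1 -> forall i j, (i <= j < k)%N -> Y i <= Y j.
Proof.
move=> [_ _ _ Ypos hY] dl_small i j /andP[]; rewrite leq_eqVlt => /predU1P[-> //|ij] jk.
have := hY i j; rewrite ij jk => /(_ isT) /andP[lo _].
have one_le : 1 <= (eta - dl) ^+ (e j - e i) by rewrite exprn_ege1 //; lra.
by rewrite -[Y i]mul1r -ler_pdivlMr ?Ypos ?(ltn_trans ij) ?(le_trans one_le).
Qed.

Lemma admissible_growth k dl e b Y j a K :
  admissible k dl e b Y -> 1 <= a <= eta - dl -> (j.+1 < k)%N ->
  (K <= e j.+1 - e j)%N -> a ^+ K * Y j <= Y j.+1.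
Proof.
move=> [_ _ _ Ypos hY] /andP[a1 a_le] jk gap.
have := hY j j.+1; rewrite ltnSn jk => /(_ isT) /andP[lo _].
rewrite -ler_pdivlMr ?Ypos ?(ltn_trans (ltnSn j)) //; apply: le_trans lo.
apply: (@le_trans _ _ (a ^+ (e j.+1 - e j))); first by rewrite ler_weXn2l.
have a0 : 0 <= a := le_trans ler01 a1.
by rewrite lerXn2r ?nnegrE ?(le_trans a0 a_le).
Qed.

Lemma admissible_head_sum_le k dl e b Y j :
  admissible k dl e b Y -> dl <= eta - 1 -> (j < k)%N ->
  `|\sum_(i < j.+1) (b i)%:~R * Y i| <= (m * j.+1)%:R * Y j.
Proof.
move=> adm dl_small jk; have [_ bm _ Ypos _] := adm.
apply: le_trans (ler_norm_sum _ _ _) _.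
apply: le_trans (_ : _ <= \sum_(i < j.+1) m%:R * Y j) _; last first.
  by rewrite sumr_const card_ord natrM [leLHS](_ : _ = m%:R * j.+1%:R * Y j) //; ring.
apply: ler_sum => i _; have ik : (i < k)%N := leq_trans (ltn_ord i) jk.
rewrite normrM (gtr0_norm (Ypos i ik)) ler_pM ?normr_ge0 ?(ltW (Ypos i ik)) //.
  by rewrite -intr_norm -[m%:R]/(m%:~R) ler_int bm.
by apply: (admissible_nondecreasing adm dl_small); rewrite -ltnS ltn_ord.
Qed.

Lemma sum_bounded_below_bounded_exponents n N :
  exists2 r, 0 < r & forall dl, 0 <= dl <= r -> forall e b Y,
    admissible n dl e b Y -> (forall i, (i < n)%N -> (e i - e 0 <= N)%N) ->
    r * Y 0%N <= `|\sum_(i < n) (b i)%:~R * Y i|.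
Proof.
have [r r_gt0 lb] := sum_expr_perturb_ge_uniform n N m (lt_trans ltr01 eta_gt1).
exists r => // dl dlr e b Y adm eN; have [einc bm [j jn bj] Ypos hY] := adm.
pose d (i : 'I_n) := (e i - e 0)%N.
have e0_le i : (i < n)%N -> (e 0 <= e i)%N.
  by case: i => // i ik; apply/ltnW/einc; rewrite ik.
have d_inj : injective d.
  apply: inc_inj; apply: le_mono => i k ik; rewrite /d.
  have := einc i k; rewrite ltn_ord andbT => /(_ ik).
  by have := e0_le i (ltn_ord i); lia.
have P0 : \sum_(i < n) (b i)%:~R * eta ^+ d i != 0.
  by apply: (transcendental_sum_neq0 eta_tr d_inj); exists (Ordinal jn).
have Y0 : 0 < Y 0%N by apply: Ypos; rewrite (leq_ltn_trans _ jn).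
rewrite -ler_pdivlMr // -{1}(gtr0_norm Y0) -normf_div mulr_suml.
under eq_bigr do rewrite -mulrA.
apply: (lb d _ _ _ P0 dl dlr (fun i => Y i / Y 0%N)) => [i|i|i]; rewrite ?eN ?bm //.
rewrite /d; have [->|i_gt0] := posnP i; first by rewrite subnn !expr0 divff ?gt_eqF ?lexx.
by apply: hY; rewrite i_gt0 ltn_ord.
Qed.

Lemma sum_bounded_below_gap n r1 K dl e b Y j :
  (forall k, (k <= n)%N -> sum_bounded_below k r1) ->
  0 <= dl <= r1 -> dl <= (eta - 1) / 2 ->
  (m * n.+1)%:R + 1 <= ((eta + 1) / 2) ^+ K * r1 ->
  admissible n.+1 dl e b Y -> (j < n)%N -> (K < e j.+1 - e j)%N ->
  Order.min r1 1 * Y 0%N <= `|\sum_(i < n.+1) (b i)%:~R * Y i|.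
Proof.
move=> IH dlr dl_small Kbig adm jn gap; have eta1 := eta_gt1.
have dl_le : dl <= eta - 1 by lra.
have a0_bounds : 1 <= (eta + 1) / 2 <= eta - dl by apply/andP; split; lra.
have [_ _ [i0 i0n bi0] Ypos _] := adm.
have jn1 : (j.+1 <= n.+1)%N by rewrite ltnS ltnW.
have Y0_le : Y 0%N <= Y j by apply: (admissible_nondecreasing adm dl_le); rewrite /= ltnS ltnW.
have Yj_gt0 : 0 < Y j by rewrite Ypos // ltnS ltnW.
have Y0_gt0 : 0 < Y 0%N by apply: Ypos.
have r1_min : Order.min r1 1 <= r1 by rewrite ge_min lexx.
rewrite (big_ord_split_at (fun i => (b i)%:~R * Y i) jn1) subSS /=.
set L := \sum_(i < j.+1) _; set U := \sum_(i < n - j) _.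
have [/existsP[i iU]|/existsPn U0] := boolP [exists i : 'I_(n - j), b (i + j.+1)%N != 0].
  have admU : admissible (n - j) dl (fun i => e (i + j.+1)%N) (fun i => b (i + j.+1)%N)
      (fun i => Y (i + j.+1)%N).
    by apply: admissible_shift adm _ _; [rewrite addnS subnK ?(ltnW jn) | exists i].
  have /= := IH _ (leq_subr j n) dl dlr _ _ _ admU; rewrite add0n -/U => hU.
  have hL : `|L| <= (m * j.+1)%:R * Y j := admissible_head_sum_le adm dl_le jn1.
  have grow := admissible_growth adm a0_bounds jn (ltnW gap).
  have Mn : (m * j.+1)%:R * Y j <= (m * n.+1)%:R * Y j.
    by apply: ler_wpM2r; [exact: ltW | rewrite ler_nat leq_mul2l ltnS ltnW ?orbT].
  have r1_ge0 : 0 <= r1 by case/andP: dlr; apply: le_trans.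
  have p1 := ler_wpM2l r1_ge0 grow.
  have p2 := ler_wpM2r (ltW Yj_gt0) Kbig.
  have p3 : Order.min r1 1 * Y 0%N <= Y 0%N.
    by rewrite ler_piMl ?ge_min ?lexx ?orbT ?(ltW Y0_gt0).
  (* |U| >= r1 Y_(j+1) >= r1 ((eta+1)/2)^K Y_j >= (m (n+1) + 1) Y_j >= |L| + Y_0 *)
  have := lerB_normD U L; rewrite [L + U]addrC; lra.
have U_eq0 : U = 0 by apply: big1 => i _; move/negPn/eqP: (U0 i) => ->; rewrite mul0r.
rewrite U_eq0 addr0; apply: le_trans (ler_wpM2r (ltW Y0_gt0) r1_min) (IH _ jn dl dlr e b Y _).
apply: admissible_take adm jn1 _; exists i0 => //; rewrite ltnNge; apply/negP => ji0.
have i0U : (i0 - j.+1 < n - j)%N by rewrite -[(n - j)%N]subSS ltn_sub2r.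
by move: (U0 (Ordinal i0U)); rewrite /= subnK // bi0.
Qed.

Lemma sum_bounded_below_step n r1 : 0 < r1 ->
  (forall k, (k <= n)%N -> sum_bounded_below k r1) ->
  exists2 r, 0 < r & sum_bounded_below n.+1 r.
Proof.
move=> r1_gt0 IH; have eta1 := eta_gt1.
have a0_gt1 : 1 < (eta + 1) / 2 by lra.
have [K] := exists_expr_ge (((m * n.+1)%:R + 1) / r1) a0_gt1.
rewrite ler_pdivrMr // => Kbig.
have [r2 r2_gt0 bounded] := sum_bounded_below_bounded_exponents n.+1 (n * K).
pose r := Order.min (Order.min r1 r2) (Order.min ((eta - 1) / 2) 1).
have r_gt0 : 0 < r by rewrite !lt_min r1_gt0 r2_gt0 ltr01 divr_gt0 // subr_gt0.
have r_r1 : r <= Order.min r1 1 by rewrite le_min !ge_min !lexx ?orbT.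
have r_r2 : r <= r2 by rewrite !ge_min lexx ?orbT.
have r_eta : r <= (eta - 1) / 2 by rewrite !ge_min lexx ?orbT.
exists r => // dl /andP[dl0 dlr] e b Y adm.
have Y0_ge0 : 0 <= Y 0%N by case: adm => _ _ _ Ypos _; rewrite ltW ?Ypos.
have [/existsP[j gap]|/existsPn nogap] := boolP [exists j : 'I_n, (K < e j.+1 - e j)%N].
  apply: le_trans (sum_bounded_below_gap IH _ _ Kbig adm (ltn_ord j) gap).
  - by rewrite ler_wpM2r.
  - by rewrite dl0 (le_trans dlr) // (le_trans r_r1) // ge_min lexx.
  - exact: le_trans dlr r_eta.
apply: le_trans (bounded dl _ e b Y adm _); first by rewrite ler_wpM2r.
  by rewrite dl0 (le_trans dlr r_r2).
have [einc _ _ _ _] := adm.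
have gaps j : (j.+1 < n.+1)%N -> (e j.+1 - e j <= K)%N.
  by move=> jn; rewrite leqNgt; apply: (nogap (@Ordinal n j jn)).
move=> i ilt; apply: leq_trans (exponent_spread einc gaps ilt) _.
by rewrite leq_mul2r -ltnS ilt orbT.
Qed.

Lemma sum_bounded_below_upto n :
  exists2 r, 0 < r & forall k, (k <= n)%N -> sum_bounded_below k r.
Proof.
elim: n => [|n [r1 r1_gt0 IH]].
  by exists 1 => // k; rewrite leqn0 => /eqP -> dl _ e b Y [_ _ []].
have [r2 r2_gt0 step] := sum_bounded_below_step r1_gt0 IH.
have r_gt0 : 0 < Order.min r1 r2 by rewrite lt_min r1_gt0 r2_gt0.
exists (Order.min r1 r2) => // k; rewrite leq_eqVlt ltnS => /predU1P[->|kn].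
  by apply: sum_bounded_below_le step _; rewrite r_gt0 ge_min lexx orbT.
by apply: sum_bounded_below_le (IH k kn) _; rewrite r_gt0 ge_min lexx.
Qed.

Lemma admissible_inord n dl (e : 'I_n.+1 -> nat) (b : 'I_n.+1 -> int)
    (y : 'I_n.+1 -> R) :
  dl < eta -> e ord0 = 0%N ->
  (forall i j : 'I_n.+1, (i < j)%N -> (e i < e j)%N) ->
  (forall i, `|b i| <= m%:Z) -> (exists i, b i != 0) ->
  (forall i j : 'I_n.+1, (i < j)%N ->
     (eta - dl) ^+ (e j - e i) <= y j ^+ e j / y i ^+ e i <= (eta + dl) ^+ (e j - e i)) ->
  admissible n.+1 dl (fun k => e (inord k)) (fun k => b (inord k))
    (fun k => y (inord k) ^+ e (inord k)).
Proof.
move=> dl_lt e0 einc bm [i0 bi0] hy.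
have Y0 : y (inord 0) ^+ e (inord 0) = 1 by rewrite (inord_val ord0) e0 expr0.
split.
- by move=> i j /andP[ij jn]; apply: einc; rewrite !inordK // (ltn_trans ij).
- by move=> i _; apply: bm.
- by exists i0; rewrite ?inord_val.
- case=> [|i] ilt; first by rewrite Y0 ltr01.
  have := hy (inord 0) (inord i.+1); rewrite !inordK // => /(_ isT) /andP[+ _].
  rewrite Y0 divr1 (inord_val ord0) e0 subn0; apply: lt_le_trans.
  by rewrite exprn_gt0 // subr_gt0.
- by move=> i j /andP[ij jn]; apply: hy; rewrite !inordK // (ltn_trans ij).
Qed.

End LacunarySums.

Theorem lemma2p1 (R : realType) (m h : nat) (eta : R) :
  1 < eta -> transcendental eta ->
  exists delta : R, exists eps : R, 0 < delta /\ 0 < eps /\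
    forall (e : 'I_h -> nat) (b : 'I_h -> int),
      (forall i : 'I_h, nat_of_ord i = 0%N -> e i = 0%N) ->
      (forall i j : 'I_h, (i < j)%N -> (e i < e j)%N) ->
      (forall i : 'I_h, `|b i| <= m%:Z) ->
      (exists i : 'I_h, b i != 0) ->
      forall y : 'I_h -> R,
        (forall i j : 'I_h, (i < j)%N ->
           (eta - delta) ^+ (e j - e i) <= y j ^+ e j / y i ^+ e i
           <= (eta + delta) ^+ (e j - e i)) ->
        eps <= `| \sum_(i < h) (b i)%:~R * y i ^+ e i |.
Proof.
move=> eta_gt1 eta_tr; case: h => [|n].
  by exists 1, 1; split => //; split => // e b _ _ _ [[]].
have [r r_gt0 lb] := sum_bounded_below_upto m eta_gt1 eta_tr n.+1.
pose s := Order.min r ((eta - 1) / 2).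
have s_gt0 : 0 < s by rewrite lt_min r_gt0 divr_gt0 // subr_gt0.
have s_lt : s < eta by rewrite gt_min; apply/orP; right; lra.
exists s, s; split => //; split => // e b e0 einc bm bnz y hy.
have e_ord0 : e ord0 = 0%N by apply: e0.
have adm := admissible_inord s_lt e_ord0 einc bm bnz hy.
have lbs : sum_bounded_below eta m n.+1 s.
  by apply: sum_bounded_below_le (lb _ (leqnn _)) _; rewrite s_gt0 ge_min lexx.
have /= := lbs s _ _ _ _ adm; rewrite lexx (ltW s_gt0) (inord_val ord0) e_ord0 expr0 mulr1.
by under eq_bigr do rewrite inord_val; apply.
Qed.
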